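(* Let $\gamma>0$ and consider the closed-loop system $$\dot x_1(t)=x_2(t),\qquad \dot x_2(t)=u(t),$$ with the control $$u(t)=-\gamma\,\mathrm{sign}\bigl(x_1(t)\bigr)-\delta(t),\qquad \delta(t)=\begin{cases}|x_2(t)|\,|x_1(t)|^{-1}x_2(t) & \text{if } x_1(t)x_2(t)<0,\\ 0 & \text{otherwise.}\end{cases}$$ Suppose the initial state $x(0)=(x_1(0),x_2(0))$ satisfies $x_1(0)>0$, $x_1(0)x_2(0)<0$ and $x_2^2(0)<2\gamma|x_1(0)|$. Then the solution (while it remains in the fourth quadrant $\{x_1>0,\ x_2<0\}$) is given by $$x_1(t)=-\frac{\gamma}{\omega^2}\cos(\omega t+\phi)+B,\qquad x_2(t)=\frac{\gamma}{\omega}\sin(\omega t+\phi),$$ where $$B=\frac{\gamma\,x_1^2(0)}{2\gamma\,x_1(0)-x_2^2(0)},\qquad \phi=\pi+\arccos\Bigl(1-\frac{x_2^2(0)}{\gamma\,x_1(0)}\Bigr),\qquad \omega=\sqrt{\frac{\gamma}{B}}.$$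
   Context: This is the unperturbed case of a second-order system (double integrator) under a quasi-continuous feedback control. $\mathrm{sign}$ denotes the sign function; $\arccos$ takes values in $[0,\pi]$. *)

From Stdlib Require Export Reals Lra.
Open Scope R_scope.

Definition sgn (x : R) : R :=
  if Rlt_dec 0 x then 1 else if Rlt_dec x 0 then -1 else 0.

Definition delta (x1 x2 : R) : R :=
  if Rlt_dec (x1 * x2) 0 then Rabs x2 * / Rabs x1 * x2 else 0.

Definition ctrl (gamma x1 x2 : R) : R := - gamma * sgn x1 - delta x1 x2.

(* constants of the closed-form solution, from initial state (a, b) = x(0) *)
Definition B_of (gamma a b : R) : R := gamma * a ^ 2 / (2 * gamma * a - b ^ 2).
Definition phi_of (gamma a b : R) : R := PI + acos (1 - b ^ 2 / (gamma * a)).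
Definition omega_of (gamma a b : R) : R := sqrt (gamma / B_of gamma a b).

Definition sol1 (gamma a b t : R) : R :=
  - gamma / (omega_of gamma a b) ^ 2 * cos (omega_of gamma a b * t + phi_of gamma a b)
  + B_of gamma a b.
Definition sol2 (gamma a b t : R) : R :=
  gamma / omega_of gamma a b * sin (omega_of gamma a b * t + phi_of gamma a b).

(* In the fourth quadrant the closed loop reads x1' = x2, x2' = -gamma + x2^2/x1,
   which has the first integral (2 gamma x1 - x2^2) / x1^2.  Its value at the
   initial state is omega^2 = gamma / B, and on that level set the feedback equals
   omega^2 (B - x1): the motion is the harmonic oscillator x1'' = omega^2 (B - x1).
   The closed form is the solution of this oscillator with amplitude B through
   (x1(0), x2(0)), and it is the only one, because in the frame rotating with the
   phase omega t + phi the state of the oscillator is at rest. *)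

From Stdlib Require Import Reals Lra Psatz.
Open Scope R_scope.

Lemma derivable_pt_lim_affine (w p t : R) :
  derivable_pt_lim (fun s => w * s + p) t w.
Proof.
  pose proof (derivable_pt_lim_plus _ _ t _ _
    (derivable_pt_lim_scal id w t 1 (derivable_pt_lim_id t))
    (derivable_pt_lim_const p t)) as H.
  rewrite Rmult_1_r, Rplus_0_r in H; exact H.
Qed.

Lemma derivable_pt_lim_cos_affine (w p t : R) :
  derivable_pt_lim (fun s => cos (w * s + p)) t (- sin (w * t + p) * w).
Proof.
  apply (derivable_pt_lim_comp (fun s => w * s + p) cos).
  - apply derivable_pt_lim_affine.
  - apply derivable_pt_lim_cos.
Qed.

Lemma derivable_pt_lim_sin_affine (w p t : R) :
  derivable_pt_lim (fun s => sin (w * s + p)) t (cos (w * t + p) * w).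
Proof.
  apply (derivable_pt_lim_comp (fun s => w * s + p) sin).
  - apply derivable_pt_lim_affine.
  - apply derivable_pt_lim_sin.
Qed.

Ltac derive_rules :=
  repeat first
    [ eassumption
    | apply derivable_pt_lim_const
    | apply derivable_pt_lim_minus
    | apply derivable_pt_lim_plus
    | apply derivable_pt_lim_div
    | apply derivable_pt_lim_mult
    | apply derivable_pt_lim_cos_affine
    | apply derivable_pt_lim_sin_affine ].

(* Leaves the goal [l' = l] for the derivative [l'] computed by the rules. *)
Ltac derive :=
  lazymatch goal with
  | |- derivable_pt_lim ?f ?x ?l =>
      refine (eq_ind _ (derivable_pt_lim f x) _ l _); [derive_rules | cbv beta]
  end.

Lemma limit1_in_pos_continuity_pt (f : R -> R) :
  continuity_pt f 0 -> limit1_in f (fun t => 0 < t) (f 0) 0.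
Proof.
  intro Hf; apply limit1_imp with (D_x no_cond 0); [|exact Hf].
  intros t Ht; split; [exact I | lra].
Qed.

Ltac right_limit :=
  repeat first
    [ eassumption
    | apply limit_minus
    | apply limit_plus
    | apply limit_mul
    | apply limit_inv
    | apply limit1_in_pos_continuity_pt; solve [reg] ].

Lemma null_derivative_right_limit (h : R -> R) (T : R) :
  (forall t, 0 < t < T -> derivable_pt_lim h t 0) ->
  limit1_in h (fun t => 0 < t) (h 0) 0 ->
  forall t, 0 <= t < T -> h t = h 0.
Proof.
  intros Hd Hlim t [Ht0 HtT].
  destruct (Rle_lt_or_eq_dec 0 t Ht0) as [Ht | <-]; [|reflexivity].
  assert (Hflat : forall s, 0 < s <= t -> h s = h t).
  { intros s [Hs Hst].
    destruct (Rle_lt_or_eq_dec s t Hst) as [Hlt | ->]; [|reflexivity].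
    destruct (MVT_cor2 h (fun _ => 0) s t Hlt) as [c [Hc _]].
    - intros c Hc; apply Hd; lra.
    - lra. }
  symmetry; apply (single_limit h (fun s => 0 < s) (h 0) (h t) 0).
  - intros alp Halp; exists (alp / 2); split; [lra|].
    unfold Rdist; rewrite Rminus_0_r, Rabs_right; lra.
  - exact Hlim.
  - intros eps Heps; exists t; split; [lra|].
    intros s [Hs Hst]; simpl in *; unfold Rdist in *.
    rewrite Rminus_0_r, Rabs_right in Hst by lra.
    rewrite Hflat, Rminus_diag, Rabs_R0; lra.
Qed.

Lemma harmonic_derive (A B w p t : R) :
  derivable_pt_lim (fun s => B - A * cos (w * s + p)) t (A * w * sin (w * t + p)) /\
  derivable_pt_lim (fun s => A * w * sin (w * s + p)) t
    (w ^ 2 * (B - (B - A * cos (w * t + p)))).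
Proof.
  split; derive; ring.
Qed.

Section HarmonicOscillator.

Variables (w B T : R) (y1 y2 : R -> R).
Hypothesis w_neq0 : w <> 0.
Hypothesis y_deriv : forall t, 0 < t < T ->
  derivable_pt_lim y1 t (y2 t) /\ derivable_pt_lim y2 t (w ^ 2 * (B - y1 t)).
Hypothesis y1_right : limit1_in y1 (fun t => 0 < t) (y1 0) 0.
Hypothesis y2_right : limit1_in y2 (fun t => 0 < t) (y2 0) 0.

Let rot_c p t := (B - y1 t) * cos (w * t + p) + y2 t / w * sin (w * t + p).
Let rot_s p t := y2 t / w * cos (w * t + p) - (B - y1 t) * sin (w * t + p).

Lemma rotating_frame_const p t :
  0 <= t < T -> rot_c p t = rot_c p 0 /\ rot_s p t = rot_s p 0.
Proof.
  intro Ht.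
  split; apply null_derivative_right_limit with T; auto;
    try (unfold rot_c, rot_s, Rdiv; right_limit).
  - intros s Hs; destruct (y_deriv s Hs).
    unfold rot_c; derive; unfold Rsqr; field; exact w_neq0.
  - intros s Hs; destruct (y_deriv s Hs).
    unfold rot_s; derive; unfold Rsqr; field; exact w_neq0.
Qed.

Lemma harmonic_oscillator_unique A p :
  y1 0 = B - A * cos p -> y2 0 = A * w * sin p ->
  forall t, 0 <= t < T ->
    y1 t = B - A * cos (w * t + p) /\ y2 t = A * w * sin (w * t + p).
Proof.
  intros Hy1 Hy2 t Ht.
  destruct (rotating_frame_const p t Ht) as [Hc Hs].
  unfold rot_c, rot_s in Hc, Hs.
  rewrite Rmult_0_r, Rplus_0_l, Hy1, Hy2 in Hc, Hs.
  pose proof (sin2_cos2 p) as Hp; pose proof (sin2_cos2 (w * t + p)) as Hwp.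
  unfold Rsqr in Hp, Hwp.
  set (c := cos (w * t + p)) in *; set (s := sin (w * t + p)) in *.
  set (u := B - y1 t) in *; set (v := y2 t / w) in *.
  assert (Hc' : u * c + v * s = A).
  { rewrite Hc; transitivity (A * (sin p * sin p + cos p * cos p)).
    - field; exact w_neq0.
    - rewrite Hp; ring. }
  assert (Hs' : v * c - u * s = 0) by (rewrite Hs; field; exact w_neq0).
  assert (Hu : u = c * (u * c + v * s) - s * (v * c - u * s)).
  { transitivity (u * (s * s + c * c)); [rewrite Hwp|]; ring. }
  assert (Hv : v = s * (u * c + v * s) + c * (v * c - u * s)).
  { transitivity (v * (s * s + c * c)); [rewrite Hwp|]; ring. }
  rewrite Hc', Hs' in Hu, Hv; unfold u, v in Hu, Hv.
  split; [lra|].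
  replace (y2 t) with (w * (y2 t / w)) by (field; exact w_neq0).
  rewrite Hv; ring.
Qed.

End HarmonicOscillator.

Definition first_integral (gamma x1 x2 : R) : R := (2 * gamma * x1 - x2 ^ 2) / x1 ^ 2.

Lemma ctrl_fourth_quadrant gamma x1 x2 :
  0 < x1 -> x2 < 0 -> ctrl gamma x1 x2 = - gamma + x2 ^ 2 / x1.
Proof.
  intros Hx1 Hx2; unfold ctrl, sgn, delta.
  destruct (Rlt_dec 0 x1); [|lra].
  destruct (Rlt_dec (x1 * x2) 0); [|nra].
  rewrite Rabs_left, Rabs_right by lra; field; lra.
Qed.

Lemma ctrl_first_integral gamma w x1 x2 :
  0 < x1 -> x2 < 0 -> first_integral gamma x1 x2 = w ^ 2 ->
  ctrl gamma x1 x2 = gamma - w ^ 2 * x1.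
Proof.
  intros Hx1 Hx2 HF; rewrite ctrl_fourth_quadrant, <- HF by assumption.
  unfold first_integral; field; lra.
Qed.

Lemma first_integral_const gamma T (x1 x2 : R -> R) :
  (forall t, 0 < t < T ->
     derivable_pt_lim x1 t (x2 t) /\
     derivable_pt_lim x2 t (ctrl gamma (x1 t) (x2 t))) ->
  (forall t, 0 <= t < T -> 0 < x1 t /\ x2 t < 0) ->
  limit1_in x1 (fun t => 0 < t) (x1 0) 0 ->
  limit1_in x2 (fun t => 0 < t) (x2 0) 0 ->
  forall t, 0 <= t < T ->
    first_integral gamma (x1 t) (x2 t) = first_integral gamma (x1 0) (x2 0).
Proof.
  intros Hd Hq L1 L2 t Ht.
  destruct (Hq 0) as [Ha _]; [lra|].
  apply (null_derivative_right_limit (fun s => first_integral gamma (x1 s) (x2 s)) T);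
    [|unfold first_integral, Rdiv; simpl; right_limit; nra | exact Ht].
  intros s Hs; destruct (Hd s Hs) as [D1 D2]; destruct (Hq s) as [H1 H2]; [lra|].
  rewrite ctrl_fourth_quadrant in D2 by assumption.
  apply derivable_pt_lim_ext with
    (fun s => (2 * gamma * x1 s - x2 s * x2 s) / (x1 s * x1 s));
    [intro; unfold first_integral; simpl; rewrite !Rmult_1_r; reflexivity|].
  derive; [nra|]; unfold Rsqr; field; lra.
Qed.

Lemma first_integral_harmonic B w th :
  B <> 0 -> cos th <> 1 ->
  first_integral (B * w ^ 2) (B - B * cos th) (B * w * sin th) = w ^ 2.
Proof.
  intros HB Hth; unfold first_integral.
  pose proof (sin2_cos2 th) as Hsc; unfold Rsqr in Hsc.
  replace ((B * w * sin th) ^ 2) with (B ^ 2 * w ^ 2 * (1 - cos th * cos th))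
    by (rewrite <- Hsc; ring).
  field; intro H; apply Hth, (Rmult_eq_reg_l B); [lra | exact HB].
Qed.

Section ClosedForm.

Variables gamma a b : R.
Hypothesis gamma_pos : 0 < gamma.
Hypothesis a_pos : 0 < a.
Hypothesis b_neg : b < 0.
Hypothesis b_sq_lt : b ^ 2 < 2 * gamma * a.

Let B := B_of gamma a b.
Let w := omega_of gamma a b.
Let p := phi_of gamma a b.

Lemma B_of_pos : 0 < B.
Proof. unfold B, B_of; apply Rdiv_lt_0_compat; nra. Qed.

Lemma omega_of_pos : 0 < w.
Proof.
  pose proof B_of_pos.
  unfold w, omega_of; apply sqrt_lt_R0, Rdiv_lt_0_compat; assumption.
Qed.

Lemma gamma_eq_B_omega_sq : gamma = B * w ^ 2.
Proof.
  pose proof B_of_pos.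
  unfold w, omega_of; fold B.
  rewrite pow2_sqrt; [field; lra | apply Rlt_le, Rdiv_lt_0_compat; assumption].
Qed.

Lemma sol1_harmonic t : sol1 gamma a b t = B - B * cos (w * t + p).
Proof.
  pose proof omega_of_pos.
  unfold sol1; fold w p B; rewrite gamma_eq_B_omega_sq; field; lra.
Qed.

Lemma sol2_harmonic t : sol2 gamma a b t = B * w * sin (w * t + p).
Proof.
  pose proof omega_of_pos.
  unfold sol2; fold w p B; rewrite gamma_eq_B_omega_sq; field; lra.
Qed.

Lemma initial_state_phase : a = B - B * cos p /\ b = B * w * sin p.
Proof.
  pose proof B_of_pos; pose proof omega_of_pos.
  set (c := 1 - b ^ 2 / (gamma * a)).
  assert (Hq : b ^ 2 / (gamma * a) * (gamma * a) = b ^ 2) by (field; lra).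
  assert (Hc : -1 <= c <= 1).
  { assert (0 < b ^ 2 / (gamma * a)) by (apply Rdiv_lt_0_compat; nra).
    unfold c; split; nra. }
  assert (Hcos : cos p = - c).
  { unfold p, phi_of; fold c; rewrite Rplus_comm, neg_cos, cos_acos; auto. }
  (* [sin (acos c) >= 0], so the shift by [PI] gives [sin p] the sign of [b]. *)
  assert (Hsin : sin p = - sqrt (1 - c²)).
  { unfold p, phi_of; fold c; rewrite Rplus_comm, neg_sin, sin_acos; auto. }
  assert (Ha : a = B * (1 + c)).
  { unfold B, B_of, c; field; split; nra. }
  split; [rewrite Hcos, Ha; ring|].
  assert (Hb2 : (B * w * sqrt (1 - c²)) ^ 2 = b ^ 2).
  { rewrite !Rpow_mult_distr, pow2_sqrt by (unfold Rsqr; nra).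
    transitivity (B ^ 2 * w ^ 2 * (1 - c) * (1 + c)); [unfold Rsqr; ring|].
    rewrite <- Hq; unfold c at 1; rewrite Ha, gamma_eq_B_omega_sq; field.
    split; [intro Hc0; rewrite Hc0 in Ha|]; lra. }
  assert (0 <= B * w * sqrt (1 - c²)).
  { apply Rmult_le_pos; [nra | apply sqrt_pos]. }
  rewrite Hsin; nra.
Qed.

Lemma first_integral_initial : first_integral gamma a b = w ^ 2.
Proof.
  pose proof B_of_pos.
  replace (w ^ 2) with (gamma / B) by (rewrite gamma_eq_B_omega_sq; field; lra).
  unfold first_integral, B, B_of; field; split; nra.
Qed.

Lemma sol_initial : sol1 gamma a b 0 = a /\ sol2 gamma a b 0 = b.
Proof.
  rewrite sol1_harmonic, sol2_harmonic, Rmult_0_r, Rplus_0_l.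
  destruct initial_state_phase as [Ha Hb]; split; symmetry; assumption.
Qed.

Lemma sol_closed_loop t :
  0 < sol1 gamma a b t -> sol2 gamma a b t < 0 ->
  derivable_pt_lim (sol1 gamma a b) t (sol2 gamma a b t) /\
  derivable_pt_lim (sol2 gamma a b) t
    (ctrl gamma (sol1 gamma a b t) (sol2 gamma a b t)).
Proof.
  intros H1 H2; pose proof B_of_pos.
  assert (HF : first_integral gamma (sol1 gamma a b t) (sol2 gamma a b t) = w ^ 2).
  { rewrite sol1_harmonic in H1 |- *; rewrite sol2_harmonic, gamma_eq_B_omega_sq.
    apply first_integral_harmonic; [lra|].
    intro Hc; rewrite Hc in H1; lra. }
  destruct (harmonic_derive B B w p t) as [D1 D2].
  split.
  - rewrite sol2_harmonic; apply derivable_pt_lim_ext with (2 := D1).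
    intro; symmetry; apply sol1_harmonic.
  - rewrite (ctrl_first_integral _ w), sol1_harmonic by assumption.
    replace (gamma - _) with (w ^ 2 * (B - (B - B * cos (w * t + p))))
      by (rewrite gamma_eq_B_omega_sq; ring).
    apply derivable_pt_lim_ext with (2 := D2).
    intro; symmetry; apply sol2_harmonic.
Qed.

Lemma closed_loop_unique T (x1 x2 : R -> R) :
  x1 0 = a -> x2 0 = b ->
  limit1_in x1 (fun t => 0 < t) a 0 ->
  limit1_in x2 (fun t => 0 < t) b 0 ->
  (forall t, 0 < t < T ->
     derivable_pt_lim x1 t (x2 t) /\
     derivable_pt_lim x2 t (ctrl gamma (x1 t) (x2 t))) ->
  (forall t, 0 <= t < T -> 0 < x1 t /\ x2 t < 0) ->
  forall t, 0 <= t < T -> x1 t = sol1 gamma a b t /\ x2 t = sol2 gamma a b t.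
Proof.
  intros H10 H20 L1 L2 Hd Hq.
  rewrite <- H10 in L1; rewrite <- H20 in L2.
  assert (HF : forall t, 0 <= t < T -> first_integral gamma (x1 t) (x2 t) = w ^ 2).
  { intros t Ht; rewrite (first_integral_const gamma T), H10, H20 by assumption.
    exact first_integral_initial. }
  assert (Hosc : forall t, 0 < t < T ->
    derivable_pt_lim x1 t (x2 t) /\ derivable_pt_lim x2 t (w ^ 2 * (B - x1 t))).
  { intros t Ht; destruct (Hd t Ht) as [D1 D2]; destruct (Hq t) as [Hx1 Hx2]; [lra|].
    rewrite (ctrl_first_integral _ w) in D2 by (assumption || (apply HF; lra)).
    replace (gamma - _) with (w ^ 2 * (B - x1 t)) in D2
      by (rewrite gamma_eq_B_omega_sq; ring).
    split; assumption. }
  destruct initial_state_phase as [Ha Hb]; rewrite <- H10 in Ha; rewrite <- H20 in Hb.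
  pose proof omega_of_pos.
  intros t Ht; rewrite sol1_harmonic, sol2_harmonic.
  apply (harmonic_oscillator_unique w B T); auto; lra.
Qed.

End ClosedForm.

Theorem proposition1 (gamma a b : R) :
  0 < gamma -> 0 < a -> a * b < 0 -> b ^ 2 < 2 * gamma * Rabs a ->
  (* the closed-form pair has initial value (a, b) and solves the closed loop
     at every time t >= 0 at which it lies in the fourth quadrant *)
  (sol1 gamma a b 0 = a /\ sol2 gamma a b 0 = b /\
   forall t, 0 <= t -> 0 < sol1 gamma a b t -> sol2 gamma a b t < 0 ->
     derivable_pt_lim (sol1 gamma a b) t (sol2 gamma a b t) /\
     derivable_pt_lim (sol2 gamma a b) t
       (ctrl gamma (sol1 gamma a b t) (sol2 gamma a b t))) /\
  (* any solution starting at (a, b), while it remains in the fourth quadrant,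
     coincides with the closed form *)
  (forall (T : R) (x1 x2 : R -> R),
     x1 0 = a -> x2 0 = b ->
     limit1_in x1 (fun t => 0 < t) a 0 ->
     limit1_in x2 (fun t => 0 < t) b 0 ->
     (forall t, 0 < t < T ->
        derivable_pt_lim x1 t (x2 t) /\
        derivable_pt_lim x2 t (ctrl gamma (x1 t) (x2 t))) ->
     (forall t, 0 <= t < T -> 0 < x1 t /\ x2 t < 0) ->
     forall t, 0 <= t < T -> x1 t = sol1 gamma a b t /\ x2 t = sol2 gamma a b t).
Proof.
  intros Hg Ha Hab Hb2.
  assert (Hb : b < 0) by nra.
  rewrite Rabs_right in Hb2 by lra.
  split.
  - destruct (sol_initial gamma a b) as [H10 H20]; try assumption.
    split; [exact H10 | split; [exact H20 |]].
    intros t _; apply sol_closed_loop; assumption.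
  - apply closed_loop_unique; assumption.
Qed.
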